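(* Let $n\ge 2$, $0<k\le\lfloor n/2\rfloor$, $m_1,\dots,m_n\in\mathbb{R}$, and let $\mathcal{M}(t)$ be the $n\times n$ matrix whose first $k$ rows are $\big(e^{-m_1t}m_1^{r},\dots,e^{-m_nt}m_n^{r}\big)$ for $r=0,1,\dots,k-1$ and whose last $n-k$ rows are $\big(m_1^{s},\dots,m_n^{s}\big)$ for $s=0,1,\dots,n-k-1$. Then the power series of $\det\mathcal{M}(t)$ about $t=0$ has no terms of degree less than $k(n-k)$ and begins $$\det\mathcal{M}(t)=\frac{\varepsilon_{k,n}V}{(k(n-k))!}\,c_0\,t^{k(n-k)}+\dots,$$ where $V=\prod_{1\le i<j\le n}(m_i-m_j)$, $\varepsilon_{k,n}=(-1)^{k(n-k)+\sigma(k)+\sigma(n-k)}$, and $$c_0=(k(n-k))!\prod_{i=1}^{k}\frac{(i-1)!}{(n-k+i-1)!}.$$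
   Context: $\sigma:\mathbb{Z}\to\{0,1\}$ is defined by $\sigma(N)=0$ if $N\equiv 0,1\pmod 4$ and $\sigma(N)=1$ if $N\equiv 2,3\pmod 4$. *)

From HB Require Import structures.
From mathcomp Require Import all_boot all_order all_algebra.
Set Implicit Arguments. Unset Strict Implicit. Unset Printing Implicit Defensive.
Import Order.TTheory GRing.Theory Num.Theory.
Local Open Scope ring_scope.

Definition sigma (N : nat) : nat := if (N %% 4 < 2)%N then 0%N else 1%N.

(* Power series of exp(a t) in the formal variable t = 'X, truncated below degree D:
   \sum_{j<D} a^j/j! t^j.  All coefficients of degree < D are exact. *)
Definition exp_trunc (R : fieldType) (D : nat) (a : R) : {poly R} :=
  \sum_(j < D) (a ^+ j / (j`!)%:R) *: 'X^j.

(* The matrix M(t), with each exponential e^{-m_i t} replaced by its power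
   series truncated below degree D (entries as polynomials in t = 'X). *)
Definition Mtrunc (R : fieldType) (n k D : nat) (m : 'I_n -> R) : 'M[{poly R}]_n :=
  \matrix_(r < n, i < n)
    if (r < k)%N then exp_trunc D (- m i) * ((m i) ^+ r)%:P
    else ((m i) ^+ (r - k))%:P.

Definition vdm (R : fieldType) (n : nat) (m : 'I_n -> R) : R :=
  \prod_(i < n) \prod_(j < n | (i < j)%N) (m i - m j).

Definition eps (R : fieldType) (k n : nat) : R :=
  (-1) ^+ (k * (n - k) + sigma k + sigma (n - k))%N.

(* c_0 = (k(n-k))! prod_{i=1}^k (i-1)!/(n-k+i-1)!  (reindexed i' = i-1) *)
Definition c0 (R : fieldType) (k n : nat) : R :=
  ((k * (n - k))`!)%:R * \prod_(i < k) ((i`!)%:R / ((n - k + i)`!)%:R).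

From mathcomp Require Import all_boot all_order all_algebra all_fingroup.
From mathcomp Require Import zify ring.
Set Implicit Arguments. Unset Strict Implicit. Unset Printing Implicit Defensive.
Import Order.TTheory GRing.Theory Num.Theory.
Local Open Scope ring_scope.

(* Replace each exponential by its Taylor polynomial: row [r < k] of M(t) is
   sum_s (-t)^(s-r)/(s-r)! (m_i^s)_i.  Multilinearity in these rows writes
   det M(t) as a sum over maps phi from the first k rows to exponents, the term
   of phi being prod_r (-t)^(phi r - r)/(phi r - r)! times the minor with rows
   m^(phi r) on top of m^0, ..., m^(n-k-1).  That minor vanishes unless phi is
   injective with values >= n - k, and then sum_r (phi r - r) >= k(n-k), with
   equality only if phi ranges over n-k, ..., n-1.  Up to degree k(n-k) only
   these phi survive, and their sum factors as det[(-t)^(n-k+c-r)/(n-k+c-r)!]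
   times a Vandermonde determinant with its two blocks of rows swapped.  The
   first determinant is (-t)^(k(n-k)) prod_i i!/(n-k+i)! (falling factorials
   times a Vandermonde), the second is +-V, and the signs combine to eps. *)

Lemma sigma_bin2 k : sigma k = ('C(k, 2) %% 2)%N.
Proof.
elim: k => [//|k IH]; rewrite binS bin1 -modnDml -IH /sigma.
by case: ifP; case: ifP => /=; lia.
Qed.

Lemma bin2D k l : 'C(k + l, 2) = ('C(k, 2) + 'C(l, 2) + k * l)%N.
Proof.
elim: l => [|l IH]; first by rewrite addn0 muln0 addn0 (@bin_small 0 2) ?addn0.
by rewrite addnS !binS !bin1 IH; lia.
Qed.

Lemma sigma_sign_parity k l : (0 < k)%N ->
  odd (k * l + sigma k + sigma l) = odd (k * l + k * (k + l).-1 + 'C(k + l, 2)).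
Proof.
move=> k_gt0.
have bin2k : ('C(k, 2) * 2 = k * k.-1)%N.
  by rewrite -[2%N]/(2`!) bin_ffact ffactnS ffactn1.
have mulk_pred : (k * (k + l).-1 = k * k.-1 + k * l)%N.
  by rewrite -mulnDr; congr (_ * _)%N; lia.
suff: ((k * l + sigma k + sigma l) %% 2 = (k * l + k * (k + l).-1 + 'C(k + l, 2)) %% 2)%N.
  by rewrite !modn2; case: odd; case: odd.
have := sigma_bin2 k; have := sigma_bin2 l; have := bin2D k l; lia.
Qed.

Lemma prod_ord_subn_fact j : (\prod_(i < j) (j - i) = j`!)%N.
Proof.
elim: j => [|j IH]; first by rewrite big_ord0.
by rewrite big_ord_recl subn0 factS -IH.
Qed.

Lemma sorted_ltn_sum_ge (t : seq nat) (l : nat) :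
  sorted ltn t -> all (leq l) t ->
  (\sum_(i < size t) (l + i) <= \sum_(x <- t) x)%N /\
  (has (leq (l + size t)) t -> \sum_(i < size t) (l + i) < \sum_(x <- t) x)%N.
Proof.
elim: t l => [|x t IH] l /=; first by rewrite big_nil big_ord0.
move=> sorted_xt /andP[lx lt].
have x_lt_t : all (ltn x) t by apply: order_path_min sorted_xt; apply: ltn_trans.
have lS_t : all (leq l.+1) t.
  by apply/allP => y yt; apply: leq_ltn_trans lx (allP x_lt_t y yt).
have [IH_le IH_lt] := IH l.+1 (path_sorted sorted_xt) lS_t.
rewrite big_ord_recl big_cons addn0.
have -> : (\sum_(i < size t) (l + bump 0 i) = \sum_(i < size t) (l.+1 + i))%N.
  by apply: eq_bigr => i _; rewrite /bump /=; lia.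
split; first exact: leq_add.
case/orP => [big_x|big_t]; first by move: big_x IH_le; lia.
have /IH_lt : has (leq (l.+1 + size t)) t by rewrite addSn -addnS.
by move: lx; lia.
Qed.

Lemma sum_inj_ord_gt k l (g : 'I_k -> nat) :
  injective g -> (forall i, l <= g i)%N -> (exists i, l + k <= g i)%N ->
  (\sum_(i < k) (l + i) < \sum_(i < k) g i)%N.
Proof.
move=> g_inj g_ge [i0 g_i0].
pose t := sort leq [seq g i | i <- enum 'I_k].
have perm_t : perm_eq t [seq g i | i <- enum 'I_k] by rewrite perm_sort.
have sorted_t : sorted ltn t.
  rewrite ltn_sorted_uniq_leq sort_uniq map_inj_uniq ?enum_uniq //.
  exact: (sort_sorted leq_total).
have size_t : size t = k by rewrite size_sort size_map size_enum_ord.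
have t_ge : all (leq l) t.
  by rewrite (perm_all _ perm_t); apply/allP => x /mapP[i _ ->].
have [_ sum_lt] := sorted_ltn_sum_ge sorted_t t_ge.
have -> : (\sum_(i < k) g i = \sum_(x <- t) x)%N.
  by rewrite (perm_big _ perm_t) big_map big_enum.
rewrite size_t in sum_lt; apply: sum_lt; apply/hasP; exists (g i0) => //.
by rewrite (perm_mem perm_t) map_f ?mem_enum.
Qed.

Section PowerMatrices.
Variable R : comNzRingType.

Definition rotpowmx n (x : 'I_n -> R) t : 'M[R]_n :=
  \matrix_(r, i) x i ^+ ((r + (n - t)) %% n).

Lemma det_rotpowmxS N (x : 'I_N.+1 -> R) t : (t < N.+1)%N ->
  \det (rotpowmx x t.+1) = (-1) ^+ N * \det (rotpowmx x t).
Proof.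
move=> t_lt.
pose s : 'S_N.+1 := lift_perm ord0 ord_max 1.
have -> : rotpowmx x t.+1 = row_perm s (rotpowmx x t).
  apply/matrixP => r i; rewrite !mxE.
  case: (unliftP ord0 r) => [j ->|->].
    rewrite lift_perm_lift perm1 lift0 lift_max; congr (_ ^+ (_ %% _)); lia.
  rewrite lift_perm_id /=; congr (_ ^+ _).
  have -> : (N + (N.+1 - t) = (N.+1 - t.+1) + N.+1)%N by lia.
  by rewrite modnDr add0n.
rewrite row_permE det_mulmx det_perm odd_lift_perm odd_perm1 /= addbF.
by rewrite signr_odd.
Qed.

Lemma det_rotpowmx n (x : 'I_n -> R) t : (t <= n)%N ->
  \det (rotpowmx x t) = (-1) ^+ (t * n.-1) * \det (\matrix_(r < n, i < n) x i ^+ r).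
Proof.
case: n x => [|N] x.
  by rewrite leqn0 => /eqP->; rewrite !det_mx00 mul0n mulr1.
elim: t => [_|t IH t_lt].
  rewrite mul0n mul1r; congr (\det _); apply/matrixP => r i; rewrite !mxE.
  by rewrite subn0 modnDr modn_small.
rewrite det_rotpowmxS // IH ?(ltnW t_lt) // mulrA -exprD; congr (_ ^+ _ * _); lia.
Qed.

Lemma det_col_mx_powmx k l (x : 'I_(k + l) -> R) :
  \det (col_mx (\matrix_(c < k, i < k + l) x i ^+ (l + c))
                (\matrix_(j < l, i < k + l) x i ^+ j)) =
  (-1) ^+ (k * (k + l).-1) * \det (\matrix_(r < k + l, i < k + l) x i ^+ r).
Proof.
rewrite -det_rotpowmx ?leq_addr //; congr (\det _).
apply/matrixP => r i; rewrite !mxE; case: splitP => j ->; rewrite !mxE addKn.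
  by rewrite addnC modn_small // ltn_add2r.
rewrite (_ : k + j + l = j + (k + l))%N; last by lia.
by rewrite modnDr modn_small // ltn_addl.
Qed.

End PowerMatrices.

Lemma sum_ord_ltn_bin2 n : (\sum_(i < n) \sum_(j < n) (i < j) = 'C(n, 2))%N.
Proof.
elim: n => [|n IH]; first by rewrite big_ord0.
rewrite big_ord_recr /= [X in (_ + X)%N]big1 ?addn0; last first.
  by move=> j _; rewrite ltnNge -ltnS ltn_ord.
rewrite binS bin1 -IH.
under eq_bigr => i _ do rewrite big_ord_recr /=.
rewrite big_split /=; congr (_ + _)%N.
rewrite (eq_bigr (fun _ => 1%N)) ?sum_nat_const ?card_ord ?muln1 //.
by move=> i _; rewrite ltn_ord.
Qed.

Lemma det_powmx (R : fieldType) n (x : 'I_n -> R) :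
  \det (\matrix_(r < n, i < n) x i ^+ r) = (-1) ^+ 'C(n, 2) * vdm x.
Proof.
have -> : \matrix_(r < n, i < n) x i ^+ r = Vandermonde n (\row_i x i).
  by apply/matrixP => r i; rewrite !mxE.
rewrite det_Vandermonde /vdm -sum_ord_ltn_bin2 -prodrXr -big_split /=.
apply: eq_bigr => i _.
rewrite big_mkcond [X in _ = _ * X]big_mkcond -prodrXr -big_split /=.
apply: eq_bigr => j _; rewrite !mxE.
by case: ifP => _; rewrite ?expr1 ?expr0 ?mulN1r ?opprB ?mul1r.
Qed.

Section InverseFactorialDeterminant.
Variable R : comNzRingType.

Definition ffact_poly r : {poly R} := \prod_(j < r) ('X - (j%:R)%:P).

Lemma size_ffact_poly r : size (ffact_poly r) = r.+1.
Proof.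
rewrite /ffact_poly size_prod_XsubC; congr _.+1.
by rewrite -[RHS]card_ord cardT enumT /index_enum unlock.
Qed.

Lemma ffact_poly_monic r : ffact_poly r \is monic.
Proof. exact: monic_prod_XsubC. Qed.

Lemma horner_ffact_poly r x : (r <= x)%N -> (ffact_poly r).[x%:R] = (x ^_ r)%:R.
Proof.
move=> r_le_x; rewrite horner_prod ffact_prod natr_prod; apply: eq_bigr => j _.
by rewrite hornerXsubC natrB // ltnW // (leq_trans (ltn_ord j)).
Qed.

(* The polynomials [ffact_poly r] are monic of degree [r], so the matrix of
   their coefficients is unitriangular and the determinant is a Vandermonde. *)
Lemma det_ffact k l : (k <= l.+1)%N ->
  \det (\matrix_(r < k, c < k) ((l + c) ^_ r)%:R) = \prod_(c < k) (c`!)%:R :> R.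
Proof.
move=> k_le.
pose U : 'M[R]_k := \matrix_(r, s) (ffact_poly r)`_s.
pose V : 'M[R]_k := Vandermonde k (\row_(c < k) (l + c)%:R).
have -> : \matrix_(r < k, c < k) ((l + c) ^_ r)%:R = U *m V.
  apply/matrixP => r c; rewrite !mxE -horner_ffact_poly; last first.
    by have := ltn_ord r; lia.
  rewrite (@horner_coef_wide _ k) ?size_ffact_poly //.
  by apply: eq_bigr => s _; rewrite !mxE.
rewrite det_mulmx det_trig; last first.
  by apply/is_trig_mxP => r s r_lt_s; rewrite mxE nth_default // size_ffact_poly.
rewrite big1 ?mul1r => [|r _]; last first.
  by rewrite mxE -(monicP (ffact_poly_monic r)) /lead_coef size_ffact_poly.
rewrite det_Vandermonde.
under eq_bigr => i _ do under eq_bigr => j i_lt_j do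
  rewrite !mxE -natrB ?leq_add2l ?(ltnW i_lt_j) // subnDl.
under eq_bigr => i _ do rewrite big_mkcond.
rewrite exchange_big /=; apply: eq_bigr => j _; rewrite -big_mkcond /=.
rewrite -(big_ord_widen _ (fun i => (j - i)%:R) (ltnW (ltn_ord j))).
by rewrite -natr_prod prod_ord_subn_fact.
Qed.

End InverseFactorialDeterminant.

Lemma det_inv_fact (R : numFieldType) k l : (k <= l.+1)%N ->
  \det (\matrix_(r < k, c < k) ((l + c - r)`!)%:R^-1) =
  \prod_(i < k) ((i`!)%:R / ((l + i)`!)%:R) :> R.
Proof.
move=> k_le.
have -> : \matrix_(r < k, c < k) ((l + c - r)`!)%:R^-1 =
  \matrix_(r < k, c < k) ((l + c) ^_ r)%:R *m
     diag_mx (\row_(c < k) ((l + c)`!)%:R^-1) :> 'M[R]_k.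
  apply/matrixP => r c; rewrite mul_mx_diag !mxE.
  have r_le : (r <= l + c)%N by have := ltn_ord r; lia.
  rewrite -(ffact_fact r_le) natrM invfM mulrA mulfV ?mul1r //.
  by rewrite pnatr_eq0 -lt0n ffact_gt0.
rewrite det_mulmx det_ffact // det_diag -big_split /=.
by apply: eq_bigr => i _; rewrite mxE.
Qed.

Section RowExpansion.
Variable T : comNzRingType.

Lemma det_col_mx_prod k l (X : 'M[T]_(k, k + l)) (Y : 'M[T]_(l, k + l)) :
  \det (col_mx X Y) = \sum_(s : 'S_(k + l)) (-1) ^+ s *
    ((\prod_(i < k) X i (s (lshift l i))) * \prod_(j < l) Y j (s (rshift k j))).
Proof.
apply: eq_bigr => s _; rewrite big_split_ord /=.
by congr (_ * (_ * _)); apply: eq_bigr => i _; rewrite ?col_mxEu ?col_mxEd.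
Qed.

Lemma det_col_mx_mulmx k l N (F : 'M[T]_(k, N)) (W : 'M[T]_(N, k + l))
    (Y : 'M[T]_(l, k + l)) :
  \det (col_mx (F *m W) Y) = \sum_(phi : {ffun 'I_k -> 'I_N})
    (\prod_i F i (phi i)) * \det (col_mx (rowsub phi W) Y).
Proof.
rewrite det_col_mx_prod.
under eq_bigr => s _.
  under eq_bigr => i _ do rewrite mxE.
  rewrite bigA_distr_bigA /= big_distrl big_distrr /=.
  over.
rewrite /= exchange_big /=; apply: eq_bigr => phi _.
rewrite det_col_mx_prod big_distrr /=; apply: eq_bigr => s _.
have -> : \prod_(i < k) rowsub phi W i (s (lshift l i)) =
          \prod_(i < k) W (phi i) (s (lshift l i)).
  by apply: eq_bigr => i _; rewrite mxE.
by rewrite big_split /= -mulrA mulrCA.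
Qed.

End RowExpansion.

Lemma sum_window (V : nmodType) (H : nat -> V) j D N : (j + D <= N)%N ->
  \sum_(e < N) (if (j <= e < j + D)%N then H (e - j)%N else 0) = \sum_(t < D) H t.
Proof.
move=> le_N.
rewrite -(big_mkord xpredT (fun e => if (j <= e < j + D)%N then H (e - j)%N else 0)).
rewrite (big_cat_nat (n := j) (leq0n j) (leq_trans (leq_addr D j) le_N)) /=.
rewrite big1_seq ?add0r; last first.
  by move=> e /andP[_]; rewrite mem_index_iota => /andP[_ e_lt]; rewrite leqNgt e_lt.
rewrite (big_cat_nat (n := j + D) (leq_addr D j) le_N) /=.
rewrite [X in (_ + X)]big1_seq ?addr0; last first.
  by move=> e /andP[_]; rewrite mem_index_iota => /andP[e_ge _]; rewrite ltnNge e_ge andbF.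
rewrite (eq_big_nat _ _ (F2 := fun e => H (e - j)%N)) => [|e ->//].
by rewrite -{1}[j]add0n big_addn addKn big_mkord; apply: eq_bigr => t _; rewrite addnK.
Qed.

Section TruncatedDeterminant.
Variables (R : numFieldType) (k l D : nat) (m : 'I_(k + l) -> R).

Local Notation nS := (k + D)%N.

Definition Vpow : 'M[R]_(nS, k + l) := \matrix_(s, i) m i ^+ s.
Definition Vlow : 'M[R]_(l, k + l) := \matrix_(j, i) m i ^+ j.
Definition Vhigh : 'M[R]_(k, k + l) := \matrix_(c, i) m i ^+ (l + c).

Definition coefmx (f : 'I_k -> 'I_nS -> R) : 'M[{poly R}]_(k, nS) :=
  \matrix_(r, s) ((f r s)%:P * 'X^(s - r)).

Definition minor (phi : {ffun 'I_k -> 'I_nS}) : R :=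
  \det (col_mx (rowsub phi Vpow) Vlow).

Definition tdeg (phi : {ffun 'I_k -> 'I_nS}) : nat := (\sum_i (phi i - i))%N.

Lemma coef_det_coefmx f j :
  (\det (col_mx (coefmx f *m map_mx polyC Vpow) (map_mx polyC Vlow)))`_j =
  \sum_(phi : {ffun 'I_k -> 'I_nS}) (\prod_i f i (phi i) * minor phi) * (j == tdeg phi)%:R.
Proof.
rewrite det_col_mx_mulmx coef_sum; apply: eq_bigr => phi _.
have -> : \prod_i coefmx f i (phi i) = (\prod_i f i (phi i))%:P * 'X^(tdeg phi).
  rewrite /tdeg -prodrXr rmorph_prod -big_split /=.
  by apply: eq_bigr => i _; rewrite mxE.
rewrite -map_mxsub -map_col_mx det_map_mx mulrAC -polyCM.
by rewrite coefCM coefXn.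
Qed.

(* Row [r < k] of [Mtrunc] is [sum_s taylor_coef r s * t^(s - r) * row s of Vpow]:
   the truncated series of [e^(-m t) m^r] indexed by the power [s] of [m]. *)
Definition taylor_coef (r : 'I_k) (s : 'I_nS) : R :=
  if (r <= s < r + D)%N then (-1) ^+ (s - r) / ((s - r)`!)%:R else 0.

Lemma Mtrunc_coefmx :
  Mtrunc k D m = col_mx (coefmx taylor_coef *m map_mx polyC Vpow) (map_mx polyC Vlow).
Proof.
apply/matrixP => r i; rewrite /Mtrunc !mxE; case: splitP => j ->; last first.
  by rewrite addKn !mxE.
have le_nS : (j + D <= nS)%N by rewrite leq_add2r ltnW.
rewrite !mxE /exp_trunc big_distrl /=.
rewrite -(sum_window (fun t => ((- m i) ^+ t / (t`!)%:R) *: 'X^t * (m i ^+ j)%:P) le_nS).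
apply: eq_bigr => s _; rewrite !mxE /taylor_coef.
case: ifP => s_in; last by rewrite polyC0 !mul0r.
have -> : (s = j + (s - j) :> nat)%N by move: s_in; lia.
rewrite addKn -mul_polyC mulrAC -polyCM [in RHS]mulrAC -polyCM.
congr (_%:P * _); rewrite exprD [(- m i) ^+ _]exprNn.
set a := m i ^+ _; set b := m i ^+ _; set c := (-1) ^+ _; set d := _%:R; ring.
Qed.

Definition window_coef (r : 'I_k) (s : 'I_nS) : R :=
  if (l <= s < l + k)%N then (-1) ^+ (s - r) / ((s - r)`!)%:R else 0.

Lemma minor_eq0_low (phi : {ffun 'I_k -> 'I_nS}) i : (phi i < l)%N -> minor phi = 0.
Proof.
move=> phi_lt.
apply: (determinant_alternate (i1 := lshift l i) (i2 := rshift k (Ordinal phi_lt))).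
  by apply/eqP => /(congr1 val) /=; have := ltn_ord i; lia.
by move=> c; rewrite col_mxEu col_mxEd !mxE.
Qed.

Lemma minor_eq0_dup (phi : {ffun 'I_k -> 'I_nS}) i1 i2 :
  i1 != i2 -> phi i1 = phi i2 -> minor phi = 0.
Proof.
move=> i12 phi12; apply: (determinant_alternate (i1 := lshift l i1) (i2 := lshift l i2)).
  by apply: contra i12 => /eqP/lshift_inj->.
by move=> c; rewrite !col_mxEu !mxE phi12.
Qed.

Hypothesis k_le_l : (k <= l)%N.

Lemma tdeg_gt (phi : {ffun 'I_k -> 'I_nS}) :
  injective phi -> (forall i, l <= phi i)%N -> (exists i, l + k <= phi i)%N ->
  (k * l < tdeg phi)%N.
Proof.
move=> phi_inj phi_ge phi_big.
have val_phi_inj : injective (fun i => nat_of_ord (phi i)).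
  by move=> i1 i2 /val_inj/phi_inj.
have := sum_inj_ord_gt val_phi_inj phi_ge phi_big.
have -> : (\sum_(i < k) (l + i) = k * l + \sum_(i < k) i)%N.
  by rewrite big_split /= sum_nat_const card_ord.
have <- : (tdeg phi + \sum_(i < k) i = \sum_(i < k) phi i)%N.
  rewrite /tdeg -big_split /=; apply: eq_bigr => i _; rewrite subnK //.
  exact: leq_trans (ltnW (leq_trans (ltn_ord i) k_le_l)) (phi_ge i).
by rewrite ltn_add2r.
Qed.

Hypotheses (k_gt0 : (0 < k)%N) (kl_lt_D : (k * l < D)%N).

(* Up to degree [k * l] only the maps [phi] onto the rows [l, ..., l + k - 1]
   of [Vpow] contribute: the others give a vanishing minor or a larger degree. *)
Lemma taylor_term_window (phi : {ffun 'I_k -> 'I_nS}) j : (j <= k * l)%N ->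
  \prod_i taylor_coef i (phi i) * minor phi * (j == tdeg phi)%:R =
  \prod_i window_coef i (phi i) * minor phi * (j == tdeg phi)%:R.
Proof.
move=> j_le.
have [in_window | /forallPn[i0 out_i0]] := boolP [forall i, l <= phi i < l + k]%N.
  congr (_ * _ * _); apply: eq_bigr => i _; rewrite /taylor_coef /window_coef.
  have /andP[l_le lk_gt] := forallP in_window i; rewrite l_le lk_gt.
  suff -> : (i <= phi i < i + D)%N by [].
  by have := ltn_ord i; move: l_le lk_gt k_le_l kl_lt_D k_gt0; nia.
rewrite [in RHS](bigD1 i0) //= {1}/window_coef (negbTE out_i0) !mul0r.
have [/existsP[i phi_lt] | /existsPn phi_ge] := boolP [exists i, phi i < l]%N.
  by rewrite (minor_eq0_low phi_lt) mulr0 mul0r.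
have [/injectiveP phi_inj | /injectivePn[i1 [i2 i12 phi12]]] := boolP (injectiveb phi);
  last by rewrite (minor_eq0_dup i12 phi12) mulr0 mul0r.
have phi_ge' i : (l <= phi i)%N by rewrite leqNgt phi_ge.
have phi_big : exists i, (l + k <= phi i)%N.
  by exists i0; move: out_i0; rewrite phi_ge' /= -leqNgt.
have tdeg_big := tdeg_gt phi_inj phi_ge' phi_big.
by rewrite ltn_eqF ?mulr0 // (leq_ltn_trans j_le tdeg_big).
Qed.

Definition invfactmx : 'M[R]_k := \matrix_(r, c) ((l + c - r)`!)%:R^-1.
Definition taylor_windowmx : 'M[{poly R}]_k :=
  \matrix_(r, c) ((invfactmx r c)%:P * (- 'X) ^+ (l + c - r)).
Definition selmx : 'M[{poly R}]_(k, nS) := \matrix_(c, s) (s == (l + c)%N :> nat)%:R.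

Lemma coefmx_window : coefmx window_coef = taylor_windowmx *m selmx.
Proof.
apply/matrixP => r s; rewrite !mxE /window_coef.
case: ifP => s_in; last first.
  rewrite polyC0 mul0r big1 // => c _; rewrite !mxE.
  case: eqP => [s_eq|]; last by rewrite mulr0.
  by move: s_in; rewrite s_eq leq_addr ltn_add2l ltn_ord.
have s_lk : (s - l < k)%N by move: s_in; lia.
rewrite (bigD1 (Ordinal s_lk)) //= big1 ?addr0 => [|c c_ne]; last first.
  rewrite !mxE; case: eqP => [s_eq|]; last by rewrite mulr0.
  by case/eqP: c_ne; apply: val_inj; rewrite /= s_eq addKn.
have l_le_s : (l <= s)%N by case/andP: s_in.
rewrite !mxE /= subnKC // eqxx mulr1.
by rewrite [(- 'X) ^+ _]exprNn mulrA -(rmorph_sign (@polyC R)) -polyCM [_^-1 * _]mulrC.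
Qed.

Lemma selmx_Vpow : selmx *m map_mx polyC Vpow = map_mx polyC Vhigh.
Proof.
apply/matrixP => c i; rewrite !mxE.
have lc_lt : (l + c < nS)%N by have := ltn_ord c; nia.
rewrite (bigD1 (Ordinal lc_lt)) //= big1 ?addr0 => [|s s_ne]; last first.
  rewrite !mxE; case: eqP => [s_eq|]; last by rewrite mul0r.
  by case/eqP: s_ne; apply: val_inj.
by rewrite !mxE eqxx mul1r.
Qed.

(* Scaling row [r] by [(-X)^r] and column [c] by [(-X)^-(l + c)] leaves the
   constant matrix [invfactmx]. *)
Lemma det_taylor_windowmx :
  \det taylor_windowmx = (\det invfactmx)%:P * (- 'X) ^+ (k * l).
Proof.
pose dr : 'rV[{poly R}]_k := \row_r (- 'X) ^+ r.
pose dc : 'rV[{poly R}]_k := \row_c (- 'X) ^+ (l + c).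
have scaled : diag_mx dr *m taylor_windowmx = map_mx polyC invfactmx *m diag_mx dc.
  apply/matrixP => r c; rewrite mul_diag_mx mul_mx_diag !mxE mulrCA -exprD.
  by rewrite subnKC //; have := ltn_ord r; lia.
have := congr1 determinant scaled; rewrite !det_mulmx !det_diag det_map_mx.
have -> : \prod_i dc 0 i = (- 'X) ^+ (k * l) * (- 'X) ^+ (\sum_(i < k) i)%N.
  under eq_bigr do rewrite mxE.
  by rewrite prodrXr -exprD big_split /= sum_nat_const card_ord mulnC.
have -> : \prod_i dr 0 i = (- 'X) ^+ (\sum_(i < k) i)%N.
  by rewrite -prodrXr; apply: eq_bigr => i _; rewrite mxE.
have nz : (- 'X : {poly R}) ^+ (\sum_(i < k) i)%N != 0.
  by rewrite expf_neq0 // oppr_eq0 polyX_eq0.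
by move=> scaled_det; apply: (mulfI nz); rewrite scaled_det mulrA mulrC.
Qed.

Lemma det_window :
  \det (col_mx (coefmx window_coef *m map_mx polyC Vpow) (map_mx polyC Vlow)) =
  ((-1) ^+ (k * l) * (\det invfactmx * \det (col_mx Vhigh Vlow)))%:P * 'X^(k * l).
Proof.
have block : col_mx (taylor_windowmx *m map_mx polyC Vhigh) (map_mx polyC Vlow) =
    block_mx taylor_windowmx 0 0 1%:M *m map_mx polyC (col_mx Vhigh Vlow).
  by rewrite map_col_mx mul_block_col !mul0mx addr0 add0r mul1mx.
rewrite coefmx_window -mulmxA selmx_Vpow block det_mulmx det_ublock det1 mulr1.
rewrite det_map_mx det_taylor_windowmx [(- 'X) ^+ _]exprNn !polyCM rmorph_sign.
by set s := (-1) ^+ _; set x := 'X^_; set a := (\det _)%:P; set b := polyC _; ring.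
Qed.

Lemma coef_det_Mtrunc j : (j <= k * l)%N ->
  (\det (Mtrunc k D m))`_j =
  (-1) ^+ (k * l) * (\det invfactmx * \det (col_mx Vhigh Vlow)) * (j == k * l)%:R.
Proof.
move=> j_le; rewrite Mtrunc_coefmx coef_det_coefmx.
under eq_bigr do rewrite taylor_term_window //.
by rewrite -coef_det_coefmx det_window coefCM coefXn.
Qed.

End TruncatedDeterminant.

Theorem mainTheorem7 (R : realFieldType) (n k : nat) (m : 'I_n -> R) (D : nat) :
  (2 <= n)%N -> (0 < k)%N -> (k <= n./2)%N -> (k * (n - k) < D)%N ->
  (forall j : nat, (j < k * (n - k))%N -> (\det (Mtrunc k D m))`_j = 0) /\
  (\det (Mtrunc k D m))`_(k * (n - k)) =
    eps R k n * vdm m / ((k * (n - k))`!)%:R * c0 R k n.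
Proof.
move=> _ k_gt0 k_le_half kl_lt_D.
have n_half := odd_double_half n.
have [l n_kl] : exists l, n = (k + l)%N by exists (n - k)%N; lia.
subst n; rewrite addKn in kl_lt_D *.
have k_le_l : (k <= l)%N by move: k_le_half; rewrite -leq_double; lia.
split=> [j j_lt|].
  by rewrite coef_det_Mtrunc ?(ltnW j_lt) // ltn_eqF // mulr0.
rewrite coef_det_Mtrunc // eqxx mulr1 det_col_mx_powmx det_powmx.
rewrite det_inv_fact ?(leq_trans k_le_l) // /eps /c0 addKn.
rewrite -[(-1) ^+ (_ + sigma k + sigma l)]signr_odd sigma_sign_parity // signr_odd !exprD.
have fact_neq0 : ((k * l)`!)%:R != 0 :> R by rewrite pnatr_eq0 -lt0n fact_gt0.
by field.
Qed.
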